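(* Let $S$ be an intra-regular $\Gamma$-AG$^{**}$-groupoid and $A$ a nonempty subset of $S$. The following are equivalent: (i) $A$ is a left $\Gamma$-ideal of $S$; (ii) $A$ is a right $\Gamma$-ideal; (iii) $A$ is a two-sided $\Gamma$-ideal; (iv) $A\Gamma S=A$ and $S\Gamma A=A$; (v) $A$ is a $\Gamma$-quasi ideal; (vi) $A$ is a $\Gamma$-$(1,2)$-ideal; (vii) $A$ is a $\Gamma$-generalized bi-ideal; (viii) $A$ is a $\Gamma$-bi-ideal; (ix) $A$ is a $\Gamma$-interior ideal.
   Context: Let $S$ and $\Gamma$ be nonempty sets with a map $S\times\Gamma\times S\to S$, $(x,\gamma,y)\mapsto x\gamma y$. $S$ is a $\Gamma$-AG-groupoid if $(x\gamma y)\delta z=(z\gamma y)\delta x$ for all $x,y,z\in S$, $\gamma,\delta\in\Gamma$; it is a $\Gamma$-AG$^{**}$-groupoid if moreover $a\alpha(b\beta c)=b\alpha(a\beta c)$ for all $a,b,c\in S$, $\alpha,\beta\in\Gamma$. For subsets $A,B\subseteq S$, $A\Gamma B=\{a\gamma b: a\in A,\gamma\in\Gamma,b\in B\}$. $S$ is intra-regular if for every $a\in S$ there exist $x,y\in S$ and $\beta,\gamma,\delta\in\Gamma$ with $a=(x\beta(a\delta a))\gamma y$. For a nonempty $A\subseteq S$: left (right) $\Gamma$-ideal means $S\Gamma A\subseteq A$ ($A\Gamma S\subseteq A$); two-sided $\Gamma$-ideal means both; $\Gamma$-generalized bi-ideal means $(A\Gamma S)\Gamma A\subseteq A$. The following all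 require $A\Gamma A\subseteq A$ in addition: $\Gamma$-bi-ideal: $(A\Gamma S)\Gamma A\subseteq A$; $\Gamma$-interior ideal: $(S\Gamma A)\Gamma S\subseteq A$; $\Gamma$-quasi ideal: $S\Gamma A\cap A\Gamma S\subseteq A$; $\Gamma$-$(1,2)$-ideal: $(A\Gamma S)\Gamma(A\Gamma A)\subseteq A$. *)

From Stdlib Require Import Classical.

Section Gamma.
Variables (S G : Type) (op : S -> G -> S -> S).

Definition is_GAG : Prop :=
  forall (x y z : S) (g d : G), op (op x g y) d z = op (op z g y) d x.

Definition is_GAGss : Prop :=
  is_GAG /\ forall (a b c : S) (al be : G), op a al (op b be c) = op b al (op a be c).

Definition gprod (A B : S -> Prop) : S -> Prop :=
  fun x => exists a g b, A a /\ B b /\ x = op a g b.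

Definition fullset : S -> Prop := fun _ => True.

Definition subset (A B : S -> Prop) : Prop := forall x, A x -> B x.
Definition seteq (A B : S -> Prop) : Prop := forall x, A x <-> B x.
Definition inter (A B : S -> Prop) : S -> Prop := fun x => A x /\ B x.

Definition intra_regular : Prop :=
  forall a : S, exists (x y : S) (be ga de : G), a = op (op x be (op a de a)) ga y.

Definition left_ideal (A : S -> Prop) : Prop := subset (gprod fullset A) A.
Definition right_ideal (A : S -> Prop) : Prop := subset (gprod A fullset) A.
Definition two_sided_ideal (A : S -> Prop) : Prop := left_ideal A /\ right_ideal A.
Definition gen_bi_ideal (A : S -> Prop) : Prop :=
  subset (gprod (gprod A fullset) A) A.
Definition subgroupoid (A : S -> Prop) : Prop := subset (gprod A A) A.
Definition bi_ideal (A : S -> Prop) : Prop :=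
  subgroupoid A /\ subset (gprod (gprod A fullset) A) A.
Definition interior_ideal (A : S -> Prop) : Prop :=
  subgroupoid A /\ subset (gprod (gprod fullset A) fullset) A.
Definition quasi_ideal (A : S -> Prop) : Prop :=
  subgroupoid A /\ subset (inter (gprod fullset A) (gprod A fullset)) A.
Definition one_two_ideal (A : S -> Prop) : Prop :=
  subgroupoid A /\ subset (gprod (gprod A fullset) (gprod A A)) A.

End Gamma.
Arguments is_GAG {S G}.
Arguments is_GAGss {S G}.
Arguments gprod {S G}.
Arguments fullset : clear implicits.
Arguments intra_regular {S G}.
Arguments left_ideal {S G}.
Arguments right_ideal {S G}.
Arguments two_sided_ideal {S G}.
Arguments gen_bi_ideal {S G}.
Arguments subgroupoid {S G}.
Arguments bi_ideal {S G}.
Arguments interior_ideal {S G}.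
Arguments quasi_ideal {S G}.
Arguments one_two_ideal {S G}.
Arguments seteq {S}.
Arguments subset {S}.
Arguments inter {S}.

(** Intra-regularity factors every [a] as [a = (x β (a δ a)) γ y].  Substituting
    this factorisation into a product [s e a] and reshuffling brackets with the
    left invertive law [(x g y) d z = (z g y) d x] and the law
    [a g (b d c) = b g (a d c)] brings [s e a] into each of the shapes
    [A Γ S], [(S Γ A) Γ S], [(A Γ S) Γ A], [(A Γ S) Γ (A Γ A)], [S Γ A ∩ A Γ S],
    with [a] or [a δ a] in the positions that must lie in [A].  So every one of
    the nine notions makes [A] a left ideal; conversely a left ideal is also a
    right ideal, and two-sided ideals have all the other properties. *)


Set Implicit Arguments.

Section Ideals.
Variables (S G : Type) (op : S -> G -> S -> S) (A : S -> Prop).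
Local Notation "x ·[ g ] y" := (op x g y) (at level 40, left associativity, format "x  ·[ g ]  y").

Lemma gprod_intro (P Q : S -> Prop) u g v : P u -> Q v -> gprod op P Q (u ·[g] v).
Proof. intros Pu Qv. exists u, g, v. auto. Qed.

Lemma left_idealP : left_ideal op A <-> forall u g v, A v -> A (u ·[g] v).
Proof.
  split.
  - intros HA u g v Av. apply HA, gprod_intro; trivial. exact I.
  - intros HA z (u & g & v & _ & Av & ->). auto.
Qed.

Lemma right_idealP : right_ideal op A <-> forall u g v, A u -> A (u ·[g] v).
Proof.
  split.
  - intros HA u g v Au. apply HA, gprod_intro; trivial. exact I.
  - intros HA z (u & g & v & Au & _ & ->). auto.
Qed.

Lemma subgroupoidP : subgroupoid op A <-> forall u g v, A u -> A v -> A (u ·[g] v).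
Proof.
  split.
  - intros HA u g v Au Av. apply HA, gprod_intro; trivial.
  - intros HA z (u & g & v & Au & Av & ->). auto.
Qed.

Lemma gen_bi_idealP :
  gen_bi_ideal op A <-> forall u g v d w, A u -> A w -> A (u ·[g] v ·[d] w).
Proof.
  split.
  - intros HA u g v d w Au Aw. apply HA, gprod_intro; trivial.
    apply gprod_intro; trivial. exact I.
  - intros HA z (p & d & w & (u & g & v & Au & _ & ->) & Aw & ->). auto.
Qed.

Lemma interior_ideal_mem :
  interior_ideal op A -> forall u g v d w, A v -> A (u ·[g] v ·[d] w).
Proof.
  intros [_ HA] u g v d w Av. apply HA, gprod_intro; [apply gprod_intro|]; trivial; exact I.
Qed.

Lemma one_two_ideal_mem : one_two_ideal op A ->
  forall u g v d w h z, A u -> A w -> A z -> A (u ·[g] v ·[d] (w ·[h] z)).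
Proof.
  intros [_ HA] u g v d w h z Au Aw Az.
  apply HA, gprod_intro; apply gprod_intro; trivial. exact I.
Qed.

Lemma left_ideal_subgroupoid : left_ideal op A -> subgroupoid op A.
Proof. rewrite left_idealP, subgroupoidP. auto. Qed.

Lemma left_ideal_gen_bi_ideal : left_ideal op A -> gen_bi_ideal op A.
Proof. rewrite left_idealP, gen_bi_idealP. auto. Qed.

Lemma left_ideal_quasi_ideal : left_ideal op A -> quasi_ideal op A.
Proof.
  intros HA. split; [exact (left_ideal_subgroupoid HA)|].
  intros z [Hz _]. exact (HA z Hz).
Qed.

Lemma left_ideal_one_two_ideal : left_ideal op A -> one_two_ideal op A.
Proof.
  intros HA. split; [exact (left_ideal_subgroupoid HA)|].
  intros z (p & d & w & _ & (u & g & v & Au & Av & ->) & ->).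
  rewrite left_idealP in HA. auto.
Qed.

Lemma two_sided_ideal_interior_ideal : two_sided_ideal op A -> interior_ideal op A.
Proof.
  intros [HL HR]. split; [exact (left_ideal_subgroupoid HL)|].
  rewrite left_idealP in HL. rewrite right_idealP in HR.
  intros z (p & d & w & (u & g & v & _ & Av & ->) & _ & ->). auto.
Qed.

End Ideals.

Section GammaAGss.
Variables (S G : Type) (op : S -> G -> S -> S).
Local Notation "x ·[ g ] y" := (op x g y) (at level 40, left associativity, format "x  ·[ g ]  y").
Hypothesis left_invertive : is_GAG op.
Hypothesis left_commutative : forall a b c g d, a ·[g] (b ·[d] c) = b ·[g] (a ·[d] c).

Lemma medial a b c f g d h : a ·[g] b ·[d] (c ·[h] f) = a ·[g] c ·[d] (b ·[h] f).
Proof. rewrite left_invertive, (left_invertive c), left_invertive. reflexivity. Qed.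

Section IntraRegularElement.
Variables (a x y : S) (be ga de : G).
Hypothesis intra_a : a = x ·[be] (a ·[de] a) ·[ga] y.

Lemma intra_mul_l s e : s ·[e] a = x ·[be] (a ·[de] a) ·[e] (s ·[ga] y).
Proof. rewrite intra_a at 1. apply left_commutative. Qed.

Lemma intra_mul_r s e : a ·[e] s = s ·[ga] y ·[e] (x ·[be] (a ·[de] a)).
Proof. rewrite intra_a at 1. apply left_invertive. Qed.

Lemma intra_eq_mul_l : a = y ·[be] (x ·[de] a) ·[ga] a.
Proof. rewrite intra_a at 1. rewrite (left_commutative x a a). apply left_invertive. Qed.

Lemma intra_mul_l_quasi s e : s ·[e] a = a ·[de] a ·[e] (x ·[be] s ·[ga] y).
Proof. rewrite intra_mul_l, medial. apply left_commutative. Qed.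

Lemma intra_factor_absorb :
  x ·[be] (a ·[de] a) = a ·[ga] y ·[be] (x ·[de] (x ·[be] (a ·[de] a))).
Proof. rewrite intra_a at 1. rewrite left_invertive. apply left_commutative. Qed.

Lemma intra_factor_mul w g :
  x ·[be] (a ·[de] a) ·[g] w = a ·[g] (w ·[be] (x ·[de] (x ·[be] (a ·[de] a))) ·[ga] y).
Proof. rewrite intra_factor_absorb at 1. rewrite left_invertive. apply left_commutative. Qed.

Lemma mul_intra_factor p g :
  p ·[g] (x ·[de] a) = x ·[be] (a ·[de] a) ·[g] (p ·[de] (x ·[ga] y)).
Proof. rewrite intra_a at 1. rewrite (left_commutative x). apply left_commutative. Qed.

Lemma intra_mul_l_factor s e :
  s ·[e] a = x ·[be] (a ·[de] a) ·[be] (s ·[ga] y ·[de] (x ·[ga] y)) ·[e] a.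
Proof.
  rewrite intra_mul_l, (left_commutative x a a) at 1.
  rewrite left_invertive, mul_intra_factor. reflexivity.
Qed.

Lemma intra_mul_l_gen_bi s e : exists t g, s ·[e] a = a ·[g] t ·[e] a.
Proof. eexists; eexists. rewrite intra_mul_l_factor, intra_factor_mul. reflexivity. Qed.

Lemma intra_mul_l_one_two s e : exists t g, s ·[e] a = a ·[g] t ·[e] (a ·[de] a).
Proof.
  eexists; eexists. rewrite intra_mul_l_factor.
  rewrite (left_invertive x), left_invertive, (left_invertive (s ·[ga] y)).
  rewrite (left_commutative (a ·[be] x)), (left_invertive (a ·[de] a)).
  rewrite (left_invertive (a ·[be] x)), (left_commutative (x ·[ga] y ·[be] (s ·[ga] y))).
  reflexivity.
Qed.

End IntraRegularElement.

Section IntraRegular.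
Hypothesis intra : intra_regular op.
Variable A : S -> Prop.

Lemma left_ideal_right_ideal : left_ideal op A -> right_ideal op A.
Proof.
  rewrite left_idealP, right_idealP. intros HA a e s Aa.
  destruct (intra a) as (x & y & be & ga & de & Ha).
  rewrite (intra_mul_r Ha). auto.
Qed.

Lemma right_ideal_left_ideal : right_ideal op A -> left_ideal op A.
Proof.
  rewrite left_idealP, right_idealP. intros HA s e a Aa.
  destruct (intra a) as (x & y & be & ga & de & Ha).
  rewrite (intra_mul_l Ha), (left_commutative x a a). auto.
Qed.

Lemma left_ideal_gprod_fullset_r : left_ideal op A -> seteq (gprod op A (fullset S)) A.
Proof.
  intros HA a. split.
  - apply (left_ideal_right_ideal HA).
  - intros Aa. destruct (intra a) as (x & y & be & ga & de & Ha).
    rewrite Ha. rewrite left_idealP in HA. apply gprod_intro; auto. exact I.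
Qed.

Lemma left_ideal_gprod_fullset_l : left_ideal op A -> seteq (gprod op (fullset S) A) A.
Proof.
  intros HA a. split.
  - apply HA.
  - intros Aa. destruct (intra a) as (x & y & be & ga & de & Ha).
    rewrite (intra_eq_mul_l Ha). apply gprod_intro; trivial. exact I.
Qed.

Lemma quasi_ideal_left_ideal : quasi_ideal op A -> left_ideal op A.
Proof.
  intros [HAA HA]. rewrite subgroupoidP in HAA. apply left_idealP. intros s e a Aa.
  destruct (intra a) as (x & y & be & ga & de & Ha).
  apply HA. split; [apply gprod_intro; trivial; exact I|].
  rewrite (intra_mul_l_quasi Ha). apply gprod_intro; auto. exact I.
Qed.

Lemma one_two_ideal_left_ideal : one_two_ideal op A -> left_ideal op A.
Proof.
  intros HA. apply left_idealP. intros s e a Aa.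
  destruct (intra a) as (x & y & be & ga & de & Ha).
  destruct (intra_mul_l_one_two Ha s e) as (t & g & ->).
  apply (one_two_ideal_mem HA); trivial.
Qed.

Lemma gen_bi_ideal_left_ideal : gen_bi_ideal op A -> left_ideal op A.
Proof.
  rewrite gen_bi_idealP, left_idealP. intros HA s e a Aa.
  destruct (intra a) as (x & y & be & ga & de & Ha).
  destruct (intra_mul_l_gen_bi Ha s e) as (t & g & ->). auto.
Qed.

Lemma interior_ideal_left_ideal : interior_ideal op A -> left_ideal op A.
Proof.
  intros HA. apply left_idealP. intros s e a Aa.
  destruct (intra a) as (x & y & be & ga & de & Ha).
  rewrite (intra_mul_l Ha). apply (interior_ideal_mem HA).
  apply (proj1 HA), gprod_intro; trivial.
Qed.

End IntraRegular.
End GammaAGss.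

Theorem mainTheorem9 (S G : Type) (op : S -> G -> S -> S)
  (s0 : S) (g0 : G)
  (HS : is_GAGss op) (Hir : intra_regular op)
  (A : S -> Prop) (HA : exists a, A a) :
  (left_ideal op A <-> right_ideal op A) /\
  (left_ideal op A <-> two_sided_ideal op A) /\
  (left_ideal op A <-> (seteq (gprod op A (fullset S)) A /\ seteq (gprod op (fullset S) A) A)) /\
  (left_ideal op A <-> quasi_ideal op A) /\
  (left_ideal op A <-> one_two_ideal op A) /\
  (left_ideal op A <-> gen_bi_ideal op A) /\
  (left_ideal op A <-> bi_ideal op A) /\
  (left_ideal op A <-> interior_ideal op A).
Proof.
  destruct HS as [HL HM].
  pose proof (left_ideal_right_ideal HL Hir (A := A)) as LR.
  pose proof (right_ideal_left_ideal HM Hir (A := A)) as RL.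
  pose proof (gen_bi_ideal_left_ideal HL HM Hir (A := A)) as GBL.
  split; [split; assumption|].
  split; [split; [intros H; split; auto | intros [H _]; exact H]|].
  split.
  { split.
    - intros H. exact (conj (left_ideal_gprod_fullset_r HL Hir H)
                            (left_ideal_gprod_fullset_l HL HM Hir H)).
    - intros [_ HSA] z Hz. exact (proj1 (HSA z) Hz). }
  split; [split; [apply left_ideal_quasi_ideal | apply quasi_ideal_left_ideal; assumption]|].
  split; [split; [apply left_ideal_one_two_ideal | apply one_two_ideal_left_ideal; assumption]|].
  split; [split; [apply left_ideal_gen_bi_ideal | exact GBL]|].
  split.
  { split.
    - intros H. exact (conj (left_ideal_subgroupoid H) (left_ideal_gen_bi_ideal H)).
    - intros [_ HGB]. exact (GBL HGB). }
  split.
  - intros H. exact (two_sided_ideal_interior_ideal (conj H (LR H))).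
  - apply interior_ideal_left_ideal; assumption.
Qed.
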